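(* Let $G=(V,E)$ be a finite connected graph, $G'=(V',E')$ a connected subgraph, $F\subset E$, $q\ge1$, $\kappa\in\{1,q\}^E$ and $f\in E'\setminus F$. Then $$\frac{\det\Delta^{G'}_{\kappa_f^+}}{\det\Delta^{G'}_{\kappa_f^-}}\ \ge\ \frac{\det\Delta^{G}_{\kappa_f^+}}{\det\Delta^{G}_{\kappa_f^-}}\ \ge\ \frac{\det\Delta^{G/F}_{\kappa_f^+}}{\det\Delta^{G/F}_{\kappa_f^-}}.$$
   Context: For a finite connected (multi)graph $H$ with conductances $c$ on its edges, $\Delta^H_cf(x)=\sum_{e=\{x,y\}}c_e(f(x)-f(y))$ (sum over edges incident to $x$; loops contribute nothing) acting on $\{f:\mathbf V(H)\to\mathbb R:\sum_xf(x)=0\}$, and $\det\Delta^H_c$ is its determinant. $\Delta^{G'}_\kappa$ uses the restriction of $\kappa$ to $E'$. $G/F$ is the multigraph obtained by identifying the two endpoints of every $f'\in F$ (its edges are identified with $E\setminus F$, possibly including loops), with conductances $\kappa$ restricted to $E\setminus F$. $\kappa^+_f$ ($\kappa^-_f$) is the configuration equal to $\kappa$ except that its value at $f$ is $q$ (resp. $1$). *)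

From HB Require Import structures.
From mathcomp Require Import all_boot all_order all_algebra.
Set Implicit Arguments. Unset Strict Implicit. Unset Printing Implicit Defensive.
Import Order.TTheory GRing.Theory Num.Theory.
Local Open Scope ring_scope.

(* A finite multigraph H is given by a vertex set VS : {set V}, an edge set
   ES : {set E} and an endpoint map ends : E -> V * V (loops allowed,
   parallel edges allowed).  Conductances c : E -> R. *)

Section Lap.
Variables (R : comNzRingType) (V E : finType).

(* The weighted Laplacian operator:
   (Delta_c g)(x) = sum_{e in ES incident to x} c_e (g x - g (other end)).
   A loop at x contributes c_e((g x - g x) + (g x - g x)) = 0. *)
Definition lap_op (ES : {set E}) (ends : E -> V * V) (c : E -> R)
    (g : V -> R) (x : V) : R :=
  \sum_(e in ES) c e *
     (((ends e).1 == x)%:R * (g x - g (ends e).2)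
      + ((ends e).2 == x)%:R * (g x - g (ends e).1)).

(* Determinant of Delta_c acting on {g : VS -> R | sum_{x in VS} g x = 0},
   computed as the determinant of its matrix in the basis
   (delta_y - delta_x0)_{y in VS \ x0}, where x0 is a chosen vertex.
   Since every g in that space equals sum_{x <> x0} g(x) (delta_x - delta_x0),
   the coordinate of g on delta_x - delta_x0 is g x.  For an empty vertex set
   the space is trivial and the determinant is 1. *)
Definition lapdet (VS : {set V}) (ES : {set E}) (ends : E -> V * V)
    (c : E -> R) : R :=
  match [pick x in VS] with
  | None => 1
  | Some x0 =>
      let W := VS :\ x0 in
      \det (\matrix_(i < #|W|, j < #|W|)
              lap_op ES ends c
                (fun v => (v == enum_val j)%:R - (v == x0)%:R)
                (enum_val i))
  end.
End Lap.

Section Graph.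
Variables (V E : finType).

Definition gadj (ES : {set E}) (ends : E -> V * V) : rel V :=
  fun x y => [exists e in ES, (ends e == (x, y)) || (ends e == (y, x))].

Definition is_graph (VS : {set V}) (ES : {set E}) (ends : E -> V * V) : Prop :=
  forall e, e \in ES -> ((ends e).1 \in VS) && ((ends e).2 \in VS).

Definition gconnected (VS : {set V}) (ES : {set E}) (ends : E -> V * V) : Prop :=
  VS != set0 /\ {in VS &, forall x y, connect (gadj ES ends) x y}.

(* Contraction G/F: vertices of G/F are the classes of the equivalence
   generated by the edges of F, represented by their canonical root;
   edges are E \ F, with endpoints mapped to the classes. *)
Definition contr_root (F : {set E}) (ends : E -> V * V) (x : V) : V :=
  fingraph.root (gadj F ends) x.
Definition contr_V (F : {set E}) (ends : E -> V * V) : {set V} :=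
  [set contr_root F ends x | x in [set: V]].
Definition contr_E (F : {set E}) : {set E} := ~: F.
Definition contr_ends (F : {set E}) (ends : E -> V * V) (e : E) : V * V :=
  (contr_root F ends (ends e).1, contr_root F ends (ends e).2).
End Graph.

Definition kset (R : nzRingType) (E : finType) (kappa : E -> R) (f : E) (v : R)
  : E -> R := fun e => if e == f then v else kappa e.

From HB Require Import structures.
From mathcomp Require Import all_boot all_order all_algebra.
From mathcomp Require Import ring lra.
Set Implicit Arguments. Unset Strict Implicit. Unset Printing Implicit Defensive.
Import Order.TTheory GRing.Theory Num.Theory.
Local Open Scope ring_scope.

(* Raising the conductance of [f] from 1 to q is a rank-one update of the
   grounded Laplacian L, so by the matrix determinant lemma each of the three
   ratios is 1 + (q - 1) b L^-1 b^T, with b the incidence vector of [f].  As L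
   is positive definite, b L^-1 b^T is the maximum over potentials g of
   2 (g f1 - g f2) - sum_e c_e (g e1 - g e2)^2 (Thomson's principle).  Fewer
   edges mean less energy, so the maximum grows when passing to G'; potentials
   on G/F are the potentials on G constant on the classes of F, so the maximum
   shrinks when contracting. *)

(* Sylvester: multiplying [block_mx 1 (-Z) X 1] by the unitriangular
   [block_mx 1 Z 0 1] on either side exposes [1 + X Z] resp. [1 + Z X]. *)
Lemma det_1Dmulmx (R : comNzRingType) n (X : 'M[R]_(n, 1)) (Z : 'M[R]_(1, n)) :
  \det (1%:M + X *m Z) = 1 + (Z *m X) 0 0.
Proof.
pose B := block_mx (1%:M : 'M[R]_1) (- Z) X (1%:M : 'M[R]_n).
pose C := block_mx (1%:M : 'M[R]_1) Z 0 (1%:M : 'M[R]_n).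
have detC : \det C = 1 by rewrite det_ublock !det1 mulr1.
have BC : B *m C = block_mx 1%:M 0 X (1%:M + X *m Z).
  by rewrite mulmx_block !mulmx0 !mul1mx !mulmx1 ?addr0 ?addrN [X *m Z + _]addrC.
have CB : C *m B = block_mx (1%:M + Z *m X) 0 X 1%:M.
  by rewrite mulmx_block !mul0mx !mul1mx !mulmx1 ?add0r ?addr0 addNr.
have := congr1 determinant BC.
rewrite det_mulmx detC mulr1 det_lblock det1 mul1r => <-.
have := congr1 determinant CB.
by rewrite det_mulmx detC mul1r det_lblock det1 mulr1 det_mx11 !mxE => ->.
Qed.

Lemma det_addmx_rank1 (R : comUnitRingType) n (A : 'M[R]_n) (u : 'rV[R]_n) t :
  A \in unitmx ->
  \det (A + t *: (u^T *m u)) = \det A * (1 + t * (u *m invmx A *m u^T) 0 0).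
Proof.
move=> A_unit.
have -> : A + t *: (u^T *m u) = (1%:M + (t *: u^T) *m (u *m invmx A)) *m A.
  by rewrite mulmxDl mul1mx -!mulmxA mulVmx // mulmx1 scalemxAl.
by rewrite det_mulmx det_1Dmulmx -scalemxAr mxE mulrC -mulmxA.
Qed.

Lemma det_1Dconst1 (R : comNzRingType) n :
  \det (1%:M + const_mx 1 : 'M[R]_n) = 1 + n%:R.
Proof.
have -> : const_mx 1 = (const_mx 1 : 'M[R]_(n, 1)) *m (const_mx 1 : 'M_(1, n)).
  by apply/matrixP => i j; rewrite !mxE big_ord1 !mxE mulr1.
rewrite det_1Dmulmx mxE.
under eq_bigr => i _ do rewrite !mxE mulr1.
by rewrite sumr_const card_ord.
Qed.

Definition maximum_of (T : Type) (R : numDomainType) (h : T -> R) (r : R) :=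
  (forall x, h x <= r) /\ exists x, h x = r.

Lemma maximum_of_reparam (S T : Type) (R : numDomainType) (h : T -> R)
    (k : S -> R) (p : S -> T) r :
  (forall s, h (p s) = k s) -> (forall x, exists s, h x = h (p s)) ->
  maximum_of k r -> maximum_of h r.
Proof.
move=> hpk p_onto [k_le [s ks]]; split=> [x|]; last by exists (p s); rewrite hpk.
by have [s' ->] := p_onto x; rewrite hpk.
Qed.

Section PositiveDefinite.
Variables (R : realFieldType) (n : nat).
Implicit Types (A : 'M[R]_n) (u y : 'rV[R]_n).

Definition posdefmx A := forall y, y != 0 -> 0 < (y *m A *m y^T) 0 0.

Lemma posdefmx_unit A : posdefmx A -> A \in unitmx.
Proof.
move=> A_pd; rewrite unitmxE unitfE; apply/negP => /det0P [y y_neq0 yA].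
by have := A_pd y y_neq0; rewrite yA mul0mx mxE ltxx.
Qed.

Lemma quad_symmetric A y w : A^T = A -> y *m A *m w^T = w *m A *m y^T.
Proof.
move=> A_sym; have -> : y *m A *m w^T = (y *m A *m w^T)^T.
  by apply/matrixP => i j; rewrite !ord1 [RHS]mxE.
by rewrite !trmx_mul trmxK A_sym mulmxA.
Qed.

Lemma quad_complete_square A u y : A^T = A -> A \in unitmx ->
  let z := u *m invmx A in
  2 * (y *m u^T) 0 0 - (y *m A *m y^T) 0 0
  = (z *m u^T) 0 0 - ((y - z) *m A *m (y - z)^T) 0 0.
Proof.
move=> A_sym A_unit z.
have zA : z *m A = u by rewrite mulmxKV.
have uT : u^T = A *m z^T by rewrite -zA trmx_mul A_sym.
rewrite uT !mulmxA linearB /= mulmxBl !mulmxBr !mulmxBl (quad_symmetric z y A_sym).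
move: (y *m A *m y^T) (y *m A *m z^T) (z *m A *m z^T) => a b c.
rewrite !mxE; lra.
Qed.

Lemma posdef_quad_maximum A u : A^T = A -> posdefmx A ->
  maximum_of (fun y => 2 * (y *m u^T) 0 0 - (y *m A *m y^T) 0 0)
             ((u *m invmx A *m u^T) 0 0).
Proof.
move=> A_sym A_pd; have A_unit := posdefmx_unit A_pd.
split=> [y /=|]; last first.
  by exists (u *m invmx A); rewrite quad_complete_square // subrr !mul0mx !mxE subr0.
rewrite quad_complete_square // lerBlDr lerDl.
have [->|y_neq] := eqVneq (y - u *m invmx A) 0; first by rewrite !mul0mx mxE.
exact/ltW/A_pd.
Qed.

End PositiveDefinite.

Section Energy.
Variables (R : realFieldType) (V E : finType).
Implicit Types (VS : {set V}) (ES : {set E}) (ends : E -> V * V) (c : E -> R)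
  (g : V -> R).

Definition incidence ends e x : R :=
  ((ends e).1 == x)%:R - ((ends e).2 == x)%:R.

Definition energy ES ends c g : R :=
  \sum_(e in ES) c e * (g (ends e).1 - g (ends e).2) ^+ 2.

Definition reff_objective ES ends c f g : R :=
  2 * (g (ends f).1 - g (ends f).2) - energy ES ends c g.

Lemma lap_opE ES ends c g x :
  lap_op ES ends c g x
  = \sum_(e in ES) c e * (incidence ends e x * (g (ends e).1 - g (ends e).2)).
Proof.
apply: eq_bigr => e _; congr (_ * _); rewrite /incidence.
case: (ends e) => a b /=.
by case: (eqVneq a x) => [->|_]; case: (eqVneq b x) => [->|_] /=; ring.
Qed.

Lemma reff_objective_eq_in VS ES ends c f g1 g2 :
  is_graph VS ES ends -> f \in ES -> {in VS, g1 =1 g2} ->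
  reff_objective ES ends c f g1 = reff_objective ES ends c f g2.
Proof.
move=> graph f_in g12; have /andP [f1 f2] := graph f f_in.
rewrite /reff_objective /energy !g12 //; congr (_ - _).
by apply: eq_bigr => e e_in; have /andP [e1 e2] := graph e e_in; rewrite !g12.
Qed.

Lemma reff_objective_shift ES ends c f g k :
  reff_objective ES ends c f (fun v => g v - k) = reff_objective ES ends c f g.
Proof.
have diff a b : (g a - k) - (g b - k) = g a - g b by ring.
rewrite /reff_objective /energy diff; congr (_ - _).
by apply: eq_bigr => e _; rewrite diff.
Qed.

End Energy.

Arguments incidence {R V E} ends e x.

Lemma sum_indicator_in (R : nzSemiRingType) (V : finType) (W : {set V}) (a : V) :
  \sum_(w in W) ((a == w)%:R : R) = (a \in W)%:R.
Proof.
have [a_in|a_out] := boolP (a \in W).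
  rewrite (bigD1 a) //= eqxx big1 ?addr0 // => w /andP [_ w_neq].
  by rewrite eq_sym (negbTE w_neq).
by rewrite big1 // => w w_in; case: eqP a_out => // ->; rewrite w_in.
Qed.

Section ReducedLaplacian.
Variables (R : realFieldType) (V E : finType).
Variables (VS : {set V}) (ES : {set E}) (ends : E -> V * V) (x0 : V).
Hypotheses (graph : is_graph VS ES ends) (x0_in : x0 \in VS).
Implicit Types (c : E -> R) (y : 'rV[R]_#|VS :\ x0|).

Definition vtx (i : 'I_#|VS :\ x0|) : V := enum_val i.

Definition incvec e : 'rV[R]_#|VS :\ x0| := \row_i incidence ends e (vtx i).

Definition lapmx c : 'M[R]_#|VS :\ x0| :=
  \sum_(e in ES) c e *: ((incvec e)^T *m incvec e).

Definition pot y (v : V) : R := \sum_i y 0 i * (v == vtx i)%:R.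

Lemma vtx_in i : vtx i \in VS :\ x0.
Proof. exact: enum_valP. Qed.

Lemma pot_vtx y i : pot y (vtx i) = y 0 i.
Proof.
rewrite /pot (bigD1 i) //= eqxx mulr1 big1 ?addr0 // => j j_neq.
by rewrite (inj_eq enum_val_inj) eq_sym (negbTE j_neq) mulr0.
Qed.

Lemma pot_base y : pot y x0 = 0.
Proof.
rewrite /pot big1 // => i _; have := vtx_in i.
by rewrite in_setD1 eq_sym => /andP [/negbTE -> _]; rewrite mulr0.
Qed.

Lemma lapmxE c i j :
  lapmx c i j
  = \sum_(e in ES) c e * (incidence ends e (vtx i) * incidence ends e (vtx j)).
Proof. by rewrite summxE; apply: eq_bigr => e _; rewrite !mxE big_ord1 !mxE. Qed.

Lemma sum_incidence e : e \in ES ->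
  \sum_i incidence ends e (vtx i) = - incidence ends e x0 :> R.
Proof.
move=> e_in; have /andP [e1 e2] := graph e_in.
rewrite /vtx -(big_enum_val (A := mem (VS :\ x0)) (incidence ends e)) sumrB.
rewrite !sum_indicator_in !in_setD1 e1 e2 !andbT /incidence.
by case: ((ends e).1 == x0); case: ((ends e).2 == x0) => /=; ring.
Qed.

(* In the basis [delta_v - delta_x0] used by [lapdet], the operator's matrix is
   the reduced Laplacian times [1 + J]: the [- delta_x0] part of each basis
   vector is recovered from [sum_incidence]. *)
Lemma lapdet_mxE c :
  \matrix_(i, j) lap_op ES ends c (fun v => (v == vtx j)%:R - (v == x0)%:R) (vtx i)
  = lapmx c *m (1%:M + const_mx 1).
Proof.
apply/matrixP => i j; rewrite mulmxDr mulmx1 !mxE lap_opE lapmxE.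
under [X in _ = _ + X]eq_bigr => k _ do rewrite mxE mulr1 lapmxE.
rewrite exchange_big /= -big_split /=; apply: eq_bigr => e e_in.
by rewrite -!mulr_sumr sum_incidence // /incidence; ring.
Qed.

Lemma lapmx_update c1 cq f t : f \in ES ->
  (forall e, cq e = c1 e + t * (e == f)%:R) ->
  lapmx cq = lapmx c1 + t *: ((incvec f)^T *m incvec f).
Proof.
move=> f_in cqE; rewrite /lapmx.
under eq_bigr => e _ do rewrite cqE scalerDl.
rewrite big_split /=; congr (_ + _).
rewrite (bigD1 f f_in) /= eqxx mulr1 big1 ?addr0 // => e /andP [_ /negbTE ->].
by rewrite mulr0 scale0r.
Qed.

Lemma lapmx_tr c : (lapmx c)^T = lapmx c.
Proof.
by rewrite /lapmx linear_sum; apply: eq_bigr => e _; rewrite linearZ /= trmx_mul trmxK.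
Qed.

Lemma incvec_pot y e : (y *m (incvec e)^T) 0 0 = pot y (ends e).1 - pot y (ends e).2.
Proof. by rewrite mxE -sumrB; apply: eq_bigr => i _; rewrite !mxE mulrBr. Qed.

Lemma lapmx_quad c y : (y *m lapmx c *m y^T) 0 0 = energy ES ends c (pot y).
Proof.
rewrite /lapmx mulmx_sumr mulmx_suml summxE; apply: eq_bigr => e _.
rewrite -scalemxAr -scalemxAl mxE; congr (_ * _).
rewrite !mulmxA -(mulmxA (y *m _)) mxE big_ord1 incvec_pot.
have -> : (incvec e *m y^T) 0 0 = ((y *m (incvec e)^T)^T) 0 0.
  by rewrite trmx_mul trmxK.
by rewrite mxE incvec_pot expr2.
Qed.

Lemma lapmx_posdef c : gconnected VS ES ends -> (forall e, 0 < c e) ->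
  posdefmx (lapmx c).
Proof.
move=> [_ conn] c_pos y y_neq0; rewrite lapmx_quad /energy.
have term_ge0 e : e \in ES -> 0 <= c e * (pot y (ends e).1 - pot y (ends e).2) ^+ 2.
  by move=> _; rewrite mulr_ge0 ?sqr_ge0 ?ltW.
rewrite lt0r sumr_ge0 ?andbT //; apply: contra y_neq0 => /eqP energy0.
have pot_edge e : e \in ES -> pot y (ends e).1 = pot y (ends e).2.
  move=> e_in; move: (psumr_eq0P term_ge0 energy0 e_in) => /eqP.
  by rewrite mulf_eq0 gt_eqF //= sqrf_eq0 subr_eq0 => /eqP.
have closed0 : closed (gadj ES ends) [pred v | pot y v == 0].
  move=> a b /existsP [e /andP [e_in /orP [] /eqP ends_e]];
  by have := pot_edge e e_in; rewrite ends_e /= !inE => ->.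
apply/eqP/matrixP => i k; rewrite !ord1 mxE -pot_vtx.
have vtx_VS : vtx k \in VS by have := vtx_in k; rewrite in_setD1 => /andP [].
have := closed_connect closed0 (conn x0 (vtx k) x0_in vtx_VS).
by rewrite !inE pot_base eqxx => /esym /eqP.
Qed.

Lemma reff_objective_grounded c f : f \in ES ->
  forall g, exists y, reff_objective ES ends c f g = reff_objective ES ends c f (pot y).
Proof.
move=> f_in g; exists (\row_i (g (vtx i) - g x0)).
rewrite -(reff_objective_shift _ _ _ _ g (g x0)).
apply: (reff_objective_eq_in c graph f_in) => v v_in.
have [->|v_neq] := eqVneq v x0; first by rewrite pot_base subrr.
have v_in' : v \in VS :\ x0 by rewrite in_setD1 v_neq.
by rewrite -{1 2}(enum_rankK_in v_in' v_in') -[enum_val _]/(vtx _) pot_vtx mxE.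
Qed.

Lemma reff_objective_maximum c f :
  gconnected VS ES ends -> (forall e, 0 < c e) -> f \in ES ->
  maximum_of (reff_objective ES ends c f)
             ((incvec f *m invmx (lapmx c) *m (incvec f)^T) 0 0).
Proof.
move=> connG c_pos f_in.
apply: (maximum_of_reparam _ (reff_objective_grounded c f_in)
         (posdef_quad_maximum (incvec f) (lapmx_tr c) (lapmx_posdef connG c_pos))).
by move=> y; rewrite /reff_objective -lapmx_quad -incvec_pot.
Qed.

End ReducedLaplacian.

Lemma lapdet_ratio (R : realFieldType) (V E : finType) (VS : {set V}) (ES : {set E})
    (ends : E -> V * V) (c1 cq : E -> R) f t :
  is_graph VS ES ends -> gconnected VS ES ends -> (forall e, 0 < c1 e) ->
  f \in ES -> (forall e, cq e = c1 e + t * (e == f)%:R) ->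
  exists2 r, lapdet VS ES ends cq / lapdet VS ES ends c1 = 1 + t * r
           & maximum_of (reff_objective ES ends c1 f) r.
Proof.
move=> graph connG c1_pos f_in cqE; have [VS_neq0 _] := connG.
rewrite /lapdet; case: pickP => [x0 x0_in|VS0]; last first.
  by case/set0Pn: VS_neq0 => x; rewrite VS0.
have := lapdet_mxE x0 graph cq; have := lapdet_mxE x0 graph c1; rewrite /vtx => -> ->.
have pd1 := lapmx_posdef x0_in connG c1_pos.
have := reff_objective_maximum graph x0_in connG c1_pos f_in.
set r := (X in maximum_of _ X) => max_r; exists r => //; rewrite /r.
rewrite !det_mulmx det_1Dconst1 (lapmx_update _ _ _ f_in cqE).
rewrite det_addmx_rank1 ?posdefmx_unit //.
have := posdefmx_unit pd1; rewrite unitmxE unitfE.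
have : 1 + #|VS :\ x0|%:R != 0 :> R by rewrite addrC natr1 pnatr_eq0.
by move: (1 + _) (\det _) => d a d_neq0 a_neq0; field; rewrite a_neq0 d_neq0.
Qed.

Section Comparison.
Variables (R : realFieldType) (V E : finType).
Implicit Types (ES F : {set E}) (ends : E -> V * V) (c : E -> R) (g : V -> R).

Lemma energy_subset ES1 ES2 ends c g : ES1 \subset ES2 -> (forall e, 0 <= c e) ->
  energy ES1 ends c g <= energy ES2 ends c g.
Proof.
move=> sub c_ge0; rewrite /energy [X in _ <= X](big_setID ES1) /= (setIidPr sub).
by rewrite lerDl sumr_ge0 // => e _; rewrite mulr_ge0 ?sqr_ge0.
Qed.

Lemma reff_objective_subset ES1 ES2 ends c f g :
  ES1 \subset ES2 -> (forall e, 0 <= c e) ->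
  reff_objective ES2 ends c f g <= reff_objective ES1 ends c f g.
Proof. by move=> sub c_ge0; rewrite lerD2l lerN2 energy_subset. Qed.

Lemma gadj_sym ES ends : symmetric (gadj ES ends).
Proof. by move=> x y; apply: eq_existsb => e; rewrite orbC. Qed.

Lemma gadj_edge ES ends e : e \in ES -> gadj ES ends (ends e).1 (ends e).2.
Proof. by move=> e_in; apply/existsP; exists e; rewrite e_in -surjective_pairing eqxx. Qed.

Lemma contr_root_edge F ends e : e \in F ->
  contr_root F ends (ends e).1 = contr_root F ends (ends e).2.
Proof.
move=> e_in; apply/eqP; rewrite (root_connect (sym_connect_sym (gadj_sym F ends))).
exact/connect1/gadj_edge.
Qed.

(* [g \o contr_root F ends] is constant across every edge of [F]. *)
Lemma reff_objective_contr F ends c f g :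
  reff_objective (contr_E F) (contr_ends F ends) c f g
  = reff_objective [set: E] ends c f (g \o contr_root F ends).
Proof.
rewrite /reff_objective /energy /=; congr (_ - _).
rewrite big_mkcond [RHS]big_mkcond /=; apply: eq_bigr => e _.
rewrite in_setT /contr_E inE; have [e_in|//] := boolP (e \in F).
by rewrite (contr_root_edge ends e_in) subrr expr0n mulr0.
Qed.

Lemma contr_is_graph F ends :
  is_graph (contr_V F ends) (contr_E F) (contr_ends F ends).
Proof. by move=> e _; rewrite /contr_V /= !imset_f ?in_setT. Qed.

Lemma connect_contr_root F ends x y : gadj [set: E] ends x y ->
  connect (gadj (contr_E F) (contr_ends F ends))
          (contr_root F ends x) (contr_root F ends y).
Proof.
have sym := sym_connect_sym (gadj_sym (contr_E F) (contr_ends F ends)).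
have contr_edge e : connect (gadj (contr_E F) (contr_ends F ends))
    (contr_root F ends (ends e).1) (contr_root F ends (ends e).2).
  have [e_in|e_out] := boolP (e \in F); first by rewrite contr_root_edge.
  by apply/connect1/(gadj_edge (contr_ends F ends)); rewrite inE.
by move=> /existsP [e /andP [_ /orP [] /eqP ends_e]]; have := contr_edge e;
  rewrite ends_e // sym.
Qed.

Lemma contr_connected F ends : gconnected [set: V] [set: E] ends ->
  gconnected (contr_V F ends) (contr_E F) (contr_ends F ends).
Proof.
move=> [/set0Pn [x _] conn]; split.
  by apply/set0Pn; exists (contr_root F ends x); rewrite /contr_V /= imset_f ?in_setT.
move=> _ _ /imsetP [a _ ->] /imsetP [b _ ->].
have closed_a : closed (gadj [set: E] ends)
    [pred z | connect (gadj (contr_E F) (contr_ends F ends))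
                      (contr_root F ends a) (contr_root F ends z)].
  apply: (intro_closed (sym_connect_sym (gadj_sym _ _))) => z w zw /[!inE] a_z.
  exact: connect_trans a_z (connect_contr_root F zw).
have := closed_connect closed_a (conn a b (in_setT a) (in_setT b)).
by rewrite !inE connect0 => <-.
Qed.

End Comparison.

Unset Implicit Arguments.
Theorem lemma4p8 (R : realFieldType) (V E : finType) (ends : E -> V * V)
  (V' : {set V}) (E' : {set E}) (F : {set E}) (q : R) (kappa : E -> R) (f : E) :
  gconnected [set: V] [set: E] ends ->
  is_graph V' E' ends ->
  gconnected V' E' ends ->
  1 <= q ->
  (forall e, kappa e = 1 \/ kappa e = q) ->
  f \in E' -> f \notin F ->
  lapdet V' E' ends (kset kappa f q) / lapdet V' E' ends (kset kappa f 1)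
    >= lapdet [set: V] [set: E] ends (kset kappa f q)
       / lapdet [set: V] [set: E] ends (kset kappa f 1)
  /\
  lapdet [set: V] [set: E] ends (kset kappa f q)
       / lapdet [set: V] [set: E] ends (kset kappa f 1)
    >= lapdet (contr_V F ends) (contr_E F) (contr_ends F ends) (kset kappa f q)
       / lapdet (contr_V F ends) (contr_E F) (contr_ends F ends) (kset kappa f 1).
Proof.
move=> connG graphG' connG' q_ge1 kappa_1q f_in' f_notin.
set c1 := kset kappa f 1; set cq := kset kappa f q.
have cqE e : cq e = c1 e + (q - 1) * (e == f)%:R.
  by rewrite /cq /c1 /kset; case: (e == f); rewrite ?mulr1 ?mulr0 ?addr0 // addrC subrK.
have c1_pos e : 0 < c1 e.
  by rewrite /c1 /kset; case: ifP => // _; case: (kappa_1q e) => ->; lra.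
have graphG : is_graph [set: V] [set: E] ends by move=> e _; rewrite !in_setT.
have f_inC : f \in contr_E F by rewrite inE.
have [rG -> [rG_ge [gG rG_at]]] := lapdet_ratio graphG connG c1_pos (in_setT f) cqE.
have [rG' -> [rG'_ge _]] := lapdet_ratio graphG' connG' c1_pos f_in' cqE.
have [rC -> [_ [gC rC_at]]] :=
  lapdet_ratio (contr_is_graph (F := F) ends) (contr_connected F connG) c1_pos f_inC cqE.
split; rewrite lerD2l ler_wpM2l ?subr_ge0 //.
- rewrite -rG_at; apply: le_trans (rG'_ge gG).
  by apply: reff_objective_subset (subsetT _) _ => e; apply: ltW.
- by rewrite -rC_at reff_objective_contr; apply: rG_ge.
Qed.
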